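(* Let $$W(t)=\frac{1}{\sqrt{t^2+4t+1}}\begin{pmatrix}-t&2g(t)+1\\2g(t)+1&t\end{pmatrix}\in M_2(\mathbf C[[t]]).$$ Then $W(t)$ is, up to a sign, the unique element of $\mathrm{GL}(2,\mathbf C[[t]])$ such that (i) $W(t)^2=1$; (ii) $W(t)S_0W(t)=S_0^{-1}$; (iii) $W(t)R(t)W(t)=R(t)^{-1}$; (iv) $W(0)=\begin{pmatrix}0&1\\1&0\end{pmatrix}$.
   Context: $\mathbf C[[t]]$ is the ring of formal power series. $g(t)\in\mathbf C[[t]]$ is the power series $\frac{-1+\sqrt{1+4t}}{2}$, i.e. the unique series with zero constant term satisfying $g(t)^2+g(t)=t$; $\sqrt{t^2+4t+1}$ denotes the power series square root with constant term $1$. $S_0=\begin{pmatrix}0&-1\\1&0\end{pmatrix}$ and $R(t)=\begin{pmatrix}g(t)&1+t\\-1&-1-g(t)\end{pmatrix}$. $W(0)$ denotes the matrix of constant terms. *)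

From mathcomp Require Import all_boot all_algebra.
From mathcomp Require Export complex.
Set Implicit Arguments. Unset Strict Implicit. Unset Printing Implicit Defensive.
Import GRing.Theory.
Local Open Scope ring_scope.

Section FPS.
Variable K : comNzRingType.

(* the ring K[[t]] : f n is the coefficient of t^n *)
Definition fps := nat -> K.

Definition fps_C (c : K) : fps := fun n => if n is 0 then c else 0.
Definition fps_X : fps := fun n => if n == 1%N then 1 else 0.
Definition fps_add (f g : fps) : fps := fun n => f n + g n.
Definition fps_opp (f : fps) : fps := fun n => - f n.
Definition fps_mul (f g : fps) : fps :=
  fun n => \sum_(i < n.+1) f i * g (n - i)%N.

Record mx2 := Mx2 { e11 : fps; e12 : fps; e21 : fps; e22 : fps }.

Definition mx2_mul (A B : mx2) : mx2 :=
  Mx2 (fps_add (fps_mul (e11 A) (e11 B)) (fps_mul (e12 A) (e21 B)))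
      (fps_add (fps_mul (e11 A) (e12 B)) (fps_mul (e12 A) (e22 B)))
      (fps_add (fps_mul (e21 A) (e11 B)) (fps_mul (e22 A) (e21 B)))
      (fps_add (fps_mul (e21 A) (e12 B)) (fps_mul (e22 A) (e22 B))).

Definition mx2_one : mx2 := Mx2 (fps_C 1) (fps_C 0) (fps_C 0) (fps_C 1).
Definition mx2_opp (A : mx2) : mx2 :=
  Mx2 (fps_opp (e11 A)) (fps_opp (e12 A)) (fps_opp (e21 A)) (fps_opp (e22 A)).
Definition mx2_scale (c : fps) (A : mx2) : mx2 :=
  Mx2 (fps_mul c (e11 A)) (fps_mul c (e12 A)) (fps_mul c (e21 A)) (fps_mul c (e22 A)).

Definition mx2_is_inverse (A B : mx2) : Prop :=
  mx2_mul A B = mx2_one /\ mx2_mul B A = mx2_one.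

Definition mx2_GL (A : mx2) : Prop := exists B, mx2_is_inverse A B.

Definition mx2_at0 (A : mx2) : K * K * K * K :=
  (e11 A 0%N, e12 A 0%N, e21 A 0%N, e22 A 0%N).

Definition S0 : mx2 := Mx2 (fps_C 0) (fps_C (-1)) (fps_C 1) (fps_C 0).

Definition Rmx (g : fps) : mx2 :=
  Mx2 g (fps_add (fps_C 1) fps_X) (fps_C (-1)) (fps_add (fps_C (-1)) (fps_opp g)).

Definition lemma7p1_conditions (g : fps) (V : mx2) : Prop :=
  [/\ mx2_GL V,
      mx2_mul V V = mx2_one,
      mx2_is_inverse S0 (mx2_mul V (mx2_mul S0 V)),
      mx2_is_inverse (Rmx g) (mx2_mul V (mx2_mul (Rmx g) V))
    & mx2_at0 V = (0, 1, 1, 0)].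

(* W(t) = u * [[-t, 2g+1],[2g+1, t]]  where u = 1/sqrt(t^2+4t+1) *)
Definition Wmx (g u : fps) : mx2 :=
  let a := fps_add (fps_mul (fps_C 2) g) (fps_C 1) in
  mx2_scale u (Mx2 (fps_opp fps_X) a a fps_X).

End FPS.

(* Write a := 2g + 1, so that a^2 = 1 + 4t and s^2 = a^2 + t^2.  The matrix
   M = [[-t, a], [a, t]] satisfies M^2 = s^2, M S0 M = -s^2 S0 = s^2 S0^-1 and
   M R M = s^2 R^-1, so W = M / s has properties (i)-(iii).
   Conversely, if V satisfies (i)-(iv), anticommuting with S0 forces
   V = [[p, q], [q, -p]] with p^2 + q^2 = 1, and V R = R^-1 V gives the linear
   relation a p + t q = 0.  Together they yield (s q)^2 = a^2, and comparing
   constant terms picks s q = a, whence V = W: the normalisation (iv) already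
   excludes the sign -W. *)
From HB Require Import structures.
From mathcomp Require Import all_boot all_algebra.
From mathcomp Require Import complex.
From mathcomp Require Import boolp.
From mathcomp Require Import ring.
Set Implicit Arguments. Unset Strict Implicit. Unset Printing Implicit Defensive.
Import GRing.Theory Num.Theory.
Local Open Scope ring_scope.

Section FpsRing.
Variable K : comNzRingType.
Implicit Types f g h : fps K.

HB.instance Definition _ := gen_eqMixin (fps K).
HB.instance Definition _ := gen_choiceMixin (fps K).

Lemma fps_addA : associative (@fps_add K).
Proof. by move=> f g h; apply: funext => n; rewrite /fps_add addrA. Qed.

Lemma fps_addC : commutative (@fps_add K).
Proof. by move=> f g; apply: funext => n; rewrite /fps_add addrC. Qed.

Lemma fps_add0 : left_id (fps_C 0) (@fps_add K).
Proof. by move=> f; apply: funext => -[|n]; rewrite /fps_add /= add0r. Qed.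

Lemma fps_addN : left_inverse (fps_C 0) (@fps_opp K) (@fps_add K).
Proof. by move=> f; apply: funext => -[|n]; rewrite /fps_add /fps_opp /= addNr. Qed.

HB.instance Definition _ :=
  GRing.isZmodule.Build (fps K) fps_addA fps_addC fps_add0 fps_addN.

(* The coefficients of [f * g] below [N] only involve the truncations of [f]
   and [g] to polynomials of size [N]; this transports the ring laws of
   [{poly K}] to power series. *)
Definition fps_trunc (N : nat) f : {poly K} := \poly_(i < N) f i.

Lemma fps_mul_coef_trunc N f g n :
  (n < N)%N -> fps_mul f g n = (fps_trunc N f * fps_trunc N g)`_n.
Proof.
move=> ltnN; rewrite coefM /fps_mul; apply: eq_bigr => i _.
rewrite !coef_poly (leq_ltn_trans (leq_ord i) ltnN).
by rewrite (leq_ltn_trans (leq_subr i n) ltnN).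
Qed.

Lemma fps_mulA : associative (@fps_mul K).
Proof.
move=> f g h; apply: funext => n.
transitivity ((fps_trunc n.+1 f * (fps_trunc n.+1 g * fps_trunc n.+1 h))`_n).
  rewrite coefM /fps_mul; apply: eq_bigr => i _.
  rewrite -fps_mul_coef_trunc; last by rewrite ltnS leq_subr.
  by rewrite coef_poly (leq_ltn_trans (leq_ord i) (ltnSn n)).
rewrite mulrA coefM /fps_mul; apply: eq_bigr => i _.
rewrite -fps_mul_coef_trunc; last exact: ltn_ord.
by rewrite coef_poly ltnS leq_subr.
Qed.

Lemma fps_mulC : commutative (@fps_mul K).
Proof.
by move=> f g; apply: funext => n; rewrite !(@fps_mul_coef_trunc n.+1) // mulrC.
Qed.

Lemma fps_mul1 : left_id (fps_C 1) (@fps_mul K).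
Proof.
move=> f; apply: funext => n.
rewrite /fps_mul big_ord_recl /= mul1r subn0 big1 ?addr0 //.
by move=> i _; rewrite mul0r.
Qed.

Lemma fps_mulDl : left_distributive (@fps_mul K) (@fps_add K).
Proof.
move=> f g h; apply: funext => n; rewrite /fps_mul /fps_add -big_split /=.
by apply: eq_bigr => i _; rewrite mulrDl.
Qed.

Lemma fps_oner_neq0 : fps_C (1 : K) != fps_C 0.
Proof. by apply/eqP => /(congr1 (fun f => f 0%N)) /= /eqP; rewrite oner_eq0. Qed.

HB.instance Definition _ := GRing.Zmodule_isComNzRing.Build (fps K)
  fps_mulA fps_mulC fps_mul1 fps_mulDl fps_oner_neq0.

Lemma fps_addE f g : fps_add f g = f + g. Proof. by []. Qed.
Lemma fps_mulE f g : fps_mul f g = f * g. Proof. by []. Qed.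
Lemma fps_oppE f : fps_opp f = - f. Proof. by []. Qed.
Lemma fps_C0 : fps_C (0 : K) = 0. Proof. by []. Qed.
Lemma fps_C1 : fps_C (1 : K) = 1. Proof. by []. Qed.

Lemma fps_CD (a b : K) : fps_C (a + b) = fps_C a + fps_C b.
Proof. by rewrite -fps_addE; apply: funext => -[|n] /=; rewrite /fps_add /= ?addr0. Qed.

Lemma fps_CN (a : K) : fps_C (- a) = - fps_C a.
Proof. by rewrite -fps_oppE; apply: funext => -[|n] /=; rewrite /fps_opp /= ?oppr0. Qed.

Lemma fps_Cnat (m : nat) : fps_C (m%:R : K) = m%:R.
Proof. by elim: m => [|m IHm] //; rewrite -addn1 !natrD fps_CD IHm. Qed.

Lemma fps_coef0M f g : (f * g) 0%N = f 0%N * g 0%N.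
Proof. by rewrite -fps_mulE /fps_mul big_ord1. Qed.

Lemma fps_coef0D f g : (f + g) 0%N = f 0%N + g 0%N. Proof. by []. Qed.

Lemma fps_coef0N f : (- f) 0%N = - f 0%N. Proof. by []. Qed.

End FpsRing.

Ltac fps_norm :=
  rewrite ?fps_addE ?fps_mulE ?fps_oppE ?fps_C0 ?fps_C1 ?fps_CN ?fps_C1 ?fps_Cnat.

Lemma fps_mulIr (K : comUnitRingType) (h : fps K) :
  h 0%N \is a GRing.unit -> GRing.rreg h.
Proof.
move=> h0unit f1 f2 /eqP; rewrite -subr_eq0 -mulrBl; set f := f1 - f2 => /eqP fh0.
suff f0 : f = 0 by apply/eqP; rewrite -subr_eq0 -/f f0.
have coef_f0 n : forall m, (m <= n)%N -> f m = 0.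
  elim: n => [|n IHn] m.
    rewrite leqn0 => /eqP ->.
    have := congr1 (fun k => k 0%N) fh0; rewrite fps_coef0M /=.
    by move/(congr1 (fun x => x * (h 0%N)^-1)); rewrite -mulrA divrr // mulr1 mul0r.
  rewrite leq_eqVlt => /orP [/eqP -> | ]; last exact: IHn.
  have := congr1 (fun k => k n.+1) fh0.
  rewrite -fps_mulE /fps_mul big_ord_recr /= subnn.
  rewrite big1 ?add0r => [|i _]; last by rewrite IHn ?mul0r // -ltnS.
  by move/(congr1 (fun x => x * (h 0%N)^-1)); rewrite -mulrA divrr // mulr1 mul0r.
by apply: funext => n; rewrite (coef_f0 n n) //; case: n.
Qed.

Section Mx2Algebra.
Variable K : comNzRingType.
Implicit Types A B C : mx2 K.

Lemma mx2_mulA A B C : mx2_mul A (mx2_mul B C) = mx2_mul (mx2_mul A B) C.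
Proof.
by case: A B C => [? ? ? ?] [? ? ? ?] [? ? ? ?]; rewrite /mx2_mul /=; fps_norm;
  congr Mx2; ring.
Qed.

Lemma mx2_mul1l A : mx2_mul (mx2_one K) A = A.
Proof. by case: A => [? ? ? ?]; rewrite /mx2_mul /=; fps_norm; congr Mx2; ring. Qed.

Lemma mx2_mul1r A : mx2_mul A (mx2_one K) = A.
Proof. by case: A => [? ? ? ?]; rewrite /mx2_mul /=; fps_norm; congr Mx2; ring. Qed.

Lemma mx2_mulZl c A B : mx2_mul (mx2_scale c A) B = mx2_scale c (mx2_mul A B).
Proof.
by case: A B => [? ? ? ?] [? ? ? ?]; rewrite /mx2_mul /mx2_scale /=; fps_norm;
  congr Mx2; ring.
Qed.

Lemma mx2_mulZr c A B : mx2_mul A (mx2_scale c B) = mx2_scale c (mx2_mul A B).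
Proof.
by case: A B => [? ? ? ?] [? ? ? ?]; rewrite /mx2_mul /mx2_scale /=; fps_norm;
  congr Mx2; ring.
Qed.

Lemma mx2_scaleA c d A : mx2_scale c (mx2_scale d A) = mx2_scale (c * d) A.
Proof. by case: A => [? ? ? ?]; rewrite /mx2_scale /=; fps_norm; congr Mx2; ring. Qed.

Lemma mx2_scale1 A : mx2_scale 1 A = A.
Proof. by case: A => [? ? ? ?]; rewrite /mx2_scale /=; fps_norm; congr Mx2; ring. Qed.

Lemma mx2_inverse_unique A B C :
  mx2_mul B A = mx2_one K -> mx2_mul A C = mx2_one K -> B = C.
Proof. by move=> BA1 AC1; rewrite -[B]mx2_mul1r -AC1 mx2_mulA BA1 mx2_mul1l. Qed.

Lemma S0_inverse : mx2_is_inverse (S0 K) (mx2_opp (S0 K)).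
Proof. by split; rewrite /mx2_mul /mx2_opp /S0 /mx2_one /=; fps_norm; congr Mx2; ring. Qed.

End Mx2Algebra.

Ltac mx2_norm := rewrite /mx2_mul /mx2_one /mx2_scale /mx2_opp /S0 /Rmx /=; fps_norm.

Lemma mx2_anticomm_S0 (K : comUnitRingType) (V : mx2 K) :
  e12 V 0%N \is a GRing.unit ->
  mx2_mul V V = mx2_one K ->
  mx2_mul (S0 K) (mx2_mul V (mx2_mul (S0 K) V)) = mx2_one K ->
  V = Mx2 (e11 V) (e12 V) (e12 V) (- e11 V).
Proof.
case: V => p q r w /= q0unit; mx2_norm.
case=> VV11 VV12 _ _; case=> _ _ _ SVSV22.
have wE : w = - p.
  by apply: (fps_mulIr q0unit); apply/eqP; rewrite -subr_eq0 -VV12; apply/eqP; ring.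
subst w; have -> // : r = q.
apply: (fps_mulIr q0unit); apply/eqP; rewrite -subr_eq0.
by rewrite -(subrr 1) -{1}VV11 -SVSV22; apply/eqP; ring.
Qed.

Definition Wnum (K : comNzRingType) (g : fps K) : mx2 K :=
  Mx2 (- fps_X K) (2 * g + 1) (2 * g + 1) (fps_X K).

Definition Rmx_inv (K : comNzRingType) (g : fps K) : mx2 K :=
  Mx2 (-1 - g) (- (1 + fps_X K)) 1 g.

Section Lemma7p1.
Variable K : comUnitRingType.
Variables g s u : fps K.
Notation t := (fps_X K).
Hypothesis g0 : g 0%N = 0.
Hypothesis gE : g * g + g = t.
Hypothesis s0 : s 0%N = 1.
Hypothesis sE : s * s = 1 + (4 * t + t * t).
Hypothesis uE : u * s = 1.
Hypothesis unit2 : (2 : K) \is a GRing.unit.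

Lemma Rmx_inverse : mx2_is_inverse (Rmx g) (Rmx_inv g).
Proof. by rewrite /Rmx_inv; split; mx2_norm; rewrite -gE; congr Mx2; ring. Qed.

Lemma Wnum_sqr : mx2_mul (Wnum g) (Wnum g) = mx2_scale (s * s) (mx2_one K).
Proof. by rewrite /Wnum; mx2_norm; rewrite sE -gE; congr Mx2; ring. Qed.

Lemma Wnum_conj_S0 :
  mx2_mul (Wnum g) (mx2_mul (S0 K) (Wnum g)) = mx2_scale (s * s) (mx2_opp (S0 K)).
Proof. by rewrite /Wnum; mx2_norm; rewrite sE -gE; congr Mx2; ring. Qed.

Lemma Wnum_conj_Rmx :
  mx2_mul (Wnum g) (mx2_mul (Rmx g) (Wnum g)) = mx2_scale (s * s) (Rmx_inv g).
Proof. by rewrite /Wnum /Rmx_inv; mx2_norm; rewrite sE -gE; congr Mx2; ring. Qed.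

Lemma Wmx_scaleE : Wmx g u = mx2_scale u (Wnum g).
Proof. by rewrite /Wmx; fps_norm. Qed.

Lemma mx2_scale_u_sqr A : mx2_scale u (mx2_scale u (mx2_scale (s * s) A)) = A.
Proof.
have uusE : u * (u * (s * s)) = 1.
  by transitivity ((u * s) * (u * s)); [ring | rewrite uE mulr1].
by rewrite !mx2_scaleA -!mulrA uusE mx2_scale1.
Qed.

Lemma Wmx_conj A :
  mx2_mul (Wmx g u) (mx2_mul A (Wmx g u))
  = mx2_scale u (mx2_scale u (mx2_mul (Wnum g) (mx2_mul A (Wnum g)))).
Proof. by rewrite Wmx_scaleE mx2_mulZl !mx2_mulZr. Qed.

Lemma Wmx_sqr : mx2_mul (Wmx g u) (Wmx g u) = mx2_one K.
Proof.
by rewrite Wmx_scaleE mx2_mulZl mx2_mulZr Wnum_sqr mx2_scale_u_sqr.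
Qed.

Lemma Wmx_conditions : lemma7p1_conditions g (Wmx g u).
Proof.
have u0 : u 0%N = 1 by have := congr1 (fun k => k 0%N) uE; rewrite fps_coef0M s0 mulr1.
split.
- by exists (Wmx g u); split; exact: Wmx_sqr.
- exact: Wmx_sqr.
- by rewrite Wmx_conj Wnum_conj_S0 mx2_scale_u_sqr; exact: S0_inverse.
- by rewrite Wmx_conj Wnum_conj_Rmx mx2_scale_u_sqr; exact: Rmx_inverse.
rewrite Wmx_scaleE /mx2_at0 /=; fps_norm.
rewrite !fps_coef0M fps_coef0N fps_coef0D fps_coef0M g0 u0 mulr0 add0r.
by rewrite !mul1r oppr0.
Qed.

Lemma Rmx_conj_relation (p q : fps K) :
  mx2_mul (Mx2 p q q (- p)) (Mx2 p q q (- p)) = mx2_one K ->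
  mx2_mul (Rmx g) (mx2_mul (Mx2 p q q (- p)) (mx2_mul (Rmx g) (Mx2 p q q (- p))))
    = mx2_one K ->
  (2 * g + 1) * p + t * q = 0.
Proof.
set V := Mx2 p q q (- p) => VV RVRV.
have VRV : mx2_mul V (mx2_mul (Rmx g) V) = Rmx_inv g.
  by symmetry; apply: mx2_inverse_unique (proj2 Rmx_inverse) RVRV.
have : mx2_mul (Rmx g) V = mx2_mul V (Rmx_inv g).
  by rewrite -VRV mx2_mulA VV mx2_mul1l.
rewrite /V /Rmx_inv; mx2_norm; case=> RV11 _ _ _.
by move/eqP: RV11; rewrite -subr_eq0 => /eqP <-; ring.
Qed.

Lemma Wmx_unique V : lemma7p1_conditions g V -> V = Wmx g u.
Proof.
move=> [_ VV [SVSV _] [RVRV _]]; rewrite /mx2_at0 => -[_ q0 _ _].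
have unit_of_1 (f : fps K) : f 0%N = 1 -> f 0%N \is a GRing.unit.
  by move=> ->; rewrite unitr1.
have Vshape := mx2_anticomm_S0 (unit_of_1 _ q0) VV SVSV.
rewrite Vshape in VV RVRV *.
set p := e11 V in VV RVRV *; set q := e12 V in q0 VV RVRV *.
have a0 : (2 * g + 1) 0%N = 1 by rewrite fps_coef0D fps_coef0M g0 mulr0 add0r.
have relR := Rmx_conj_relation VV RVRV.
have pq_norm : p * p + q * q = 1 by move: VV; mx2_norm; case.
have sqE : s * q = 2 * g + 1.
  have sqa0 : (s * q + (2 * g + 1)) 0%N \is a GRing.unit.
    by rewrite fps_coef0D fps_coef0M s0 q0 a0 mul1r.
  apply: (fps_mulIr sqa0); apply/eqP; rewrite -subr_eq0; apply/eqP.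
  (* (s q)^2 - a^2 lies in the ideal of p^2 + q^2 - 1 and a p + t q. *)
  transitivity (s * s * (q * q) - (2 * g + 1) * (2 * g + 1)); first by ring.
  transitivity ((1 + 4 * t) * (p * p + q * q - 1)
                + (t * q - (2 * g + 1) * p) * ((2 * g + 1) * p + t * q)).
    by rewrite sE -gE; ring.
  by rewrite pq_norm relR; ring.
have qE : q = u * (2 * g + 1).
  by rewrite -sqE; transitivity ((u * s) * q); [rewrite uE; ring | ring].
have pE : p = - (t * u).
  apply: (fps_mulIr (unit_of_1 _ a0)).
  by apply/eqP; rewrite -subr_eq0 -relR qE; apply/eqP; ring.
by rewrite Wmx_scaleE /Wnum /mx2_scale /= pE qE; fps_norm; congr Mx2; ring.
Qed.

End Lemma7p1.

Theorem lemma7p1 (R : rcfType) (g s u : fps R[i]) :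
  g 0%N = 0 ->
  fps_add (fps_mul g g) g = fps_X R[i] ->
  s 0%N = 1 ->
  fps_mul s s = fps_add (fps_C 1)
                  (fps_add (fps_mul (fps_C 4) (fps_X R[i]))
                           (fps_mul (fps_X R[i]) (fps_X R[i]))) ->
  fps_mul u s = fps_C 1 ->
  lemma7p1_conditions g (Wmx g u) /\
  (forall V : mx2 R[i], lemma7p1_conditions g V ->
     V = Wmx g u \/ V = mx2_opp (Wmx g u)).
Proof.
fps_norm => g0 gE s0 sE uE.
have unit2 : (2 : R[i]) \is a GRing.unit by rewrite unitfE pnatr_eq0.
split; first exact: (Wmx_conditions g0 gE s0 sE uE).
by move=> V /(Wmx_unique g0 gE s0 sE uE unit2) ->; left.
Qed.
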